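(* Let $S$ be a semidomain. Then $S[x]$ is a GCD-semidomain if and only if $S$ is a GCD-domain (i.e., $S$ is an integral domain and a GCD-semidomain).
   Context: A semidomain is a subset $S$ of an integral domain $R$ containing $0$ and $1$ and closed under addition and multiplication; $S[x]$ is the semidomain of polynomials in $R[x]$ with coefficients in $S$. For a semidomain $T$, $T^*=T\setminus\{0\}$ is a multiplicative monoid. For a nonempty finite subset $F\subseteq T^*$, a greatest common divisor of $F$ is a common divisor $d\in T^*$ of all elements of $F$ (in $T^*$) that is divisible by every common divisor of $F$. $T$ is a GCD-semidomain if every nonempty finite subset of $T^*$ has a greatest common divisor. *)

From mathcomp Require Import all_boot all_order all_algebra.
Set Implicit Arguments. Unset Strict Implicit. Unset Printing Implicit Defensive.
Import GRing.Theory.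
Local Open Scope ring_scope.

Definition semidomain (R : idomainType) (S : {pred R}) : Prop :=
  [/\ 0 \in S, 1 \in S,
      (forall x y, x \in S -> y \in S -> x + y \in S) &
      (forall x y, x \in S -> y \in S -> x * y \in S)].

(* A semidomain is an integral domain iff it has additive inverses. *)
Definition is_subring_domain (R : idomainType) (S : {pred R}) : Prop :=
  forall x, x \in S -> - x \in S.

Definition polysemi (R : idomainType) (S : {pred R}) : {pred {poly R}} :=
  [pred p : {poly R} | p \is a polyOver S].

Definition divides_in (A : idomainType) (T : {pred A}) (a b : A) : Prop :=
  exists c, [/\ c \in T, c != 0 & b = a * c].

Definition is_gcd_of (A : idomainType) (T : {pred A}) (F : seq A) (d : A) : Prop :=
  [/\ d \in T, d != 0,
      (forall f, f \in F -> divides_in T d f) &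
      (forall c, c \in T -> c != 0 ->
         (forall f, f \in F -> divides_in T c f) -> divides_in T c d)].

Definition GCD_semidomain (A : idomainType) (T : {pred A}) : Prop :=
  forall F : seq A, F != [::] ->
    (forall f, f \in F -> (f \in T) && (f != 0)) ->
    exists d, is_gcd_of T F d.

(* If S[x] is a GCD-semidomain, a gcd of constants is a constant, so S is a
   GCD-semidomain; and in S[x] both X + 1 and X^2 + X + 1 divide
   f = (X^3 + 1)(X^2 + X + 1) and g = (X + 1)(X^2 + X + 1), so gcd(f, g) is
   an associate of the monic g and f / g = X^2 - X + 1 must lie in S[x],
   forcing -1 \in S.  Conversely, for a GCD-domain S the usual content
   theory holds (Gauss's lemma, by induction on degrees), and gcd(f, g) is
   gcd(c(f), c(g)) times the primitive part of an element of minimal degree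
   of the S[x]-span of f and g, since every element of that span becomes a
   multiple of it after scaling by a power of its leading coefficient. *)

From HB Require Import structures.
From mathcomp Require Import all_boot all_order all_algebra.
From mathcomp Require Import ring zify.
From Stdlib Require Import ClassicalEpsilon.
Set Implicit Arguments. Unset Strict Implicit. Unset Printing Implicit Defensive.
Import GRing.Theory.
Local Open Scope ring_scope.

Lemma polysemiE (R : idomainType) (S : {pred R}) (p : {poly R}) :
  (p \in polysemi S) = (p \is a polyOver S).
Proof. by []. Qed.

Lemma size_sub_lead (R : nzRingType) (p q : {poly R}) : p != 0 ->
  size p = size q -> lead_coef p = lead_coef q -> (size (p - q)%R < size p)%N.
Proof.
move=> p0 spq lpq; rewrite -[size p]prednK ?size_poly_gt0 // ltnS.
apply/leq_sizeP=> j; rewrite leq_eqVlt coefB => /orP[/eqP<-|jp].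
  by rewrite -lead_coefE spq -lead_coefE lpq subrr.
by rewrite !nth_default ?subrr // -?spq (leq_trans _ jp) // leqSpred.
Qed.

Lemma ex_min_size (R : nzRingType) (P : {poly R} -> Prop) p : P p -> p != 0 ->
  exists h, [/\ P h, h != 0 & forall q, P q -> q != 0 -> (size h <= size q)%N].
Proof.
move: {2}(size p) (leqnn (size p)) => n; elim: n p => [|n IHn] p sp Pp p0.
  by move: sp; rewrite leqn0 size_poly_eq0 (negPf p0).
have [[q [Pq q0 sqp]]|no_smaller] :=
  classic (exists q, [/\ P q, q != 0 & (size q < size p)%N]).
  by apply: (IHn q) => //; rewrite -ltnS (leq_trans sqp sp).
exists p; split=> // q Pq q0; rewrite leqNgt; apply/negP=> sqp.
by apply: no_smaller; exists q.
Qed.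

Lemma divides_in_trans (A : idomainType) (T : {pred A}) :
  {in T &, forall x y, x * y \in T} ->
  forall b a c, divides_in T a b -> divides_in T b c -> divides_in T a c.
Proof.
move=> TM b a c [x [xT x0 ->]] [y [yT y0 ->]].
by exists (x * y); rewrite TM ?mulf_neq0 ?mulrA.
Qed.

Lemma GCD_semidomain_of_pairs (A : idomainType) (T : {pred A}) :
  {in T &, forall x y, x * y \in T} -> 1 \in T ->
  (forall f g, f \in T -> g \in T -> f != 0 -> g != 0 ->
     exists d, is_gcd_of T [:: f; g] d) ->
  GCD_semidomain T.
Proof.
move=> TM T1 pair_gcd [//|f F] _; elim: F f => [|f' F IHF] f F_T.
  have /andP[fT f0] := F_T f (mem_head _ _).
  exists f; split=> // [g|c _ _ /(_ f (mem_head _ _))//].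
  by rewrite inE => /eqP->; exists 1; rewrite mulr1 oner_eq0.
have /andP[fT f0] := F_T f (mem_head _ _).
have [d' [d'T d'0 d'_dvd d'_max]] : exists d', is_gcd_of T (f' :: F) d'.
  by apply: IHF => g gF; apply: F_T; rewrite inE gF orbT.
have [d [dT d0 d_dvd d_max]] := pair_gcd f d' fT d'T f0 d'0.
exists d; split=> // [g|c cT c0 c_dvd].
  rewrite inE => /orP[/eqP->|gF]; first by apply: d_dvd; rewrite mem_head.
  by apply: (divides_in_trans TM) (d'_dvd _ gF); apply: d_dvd; rewrite !inE eqxx orbT.
apply: d_max => // g; rewrite !inE => /orP[]/eqP->.
  by apply: c_dvd; rewrite mem_head.
by apply: d'_max => // g' g'F; apply: c_dvd; rewrite inE g'F orbT.
Qed.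

Section FromPolyGCD.
Variables (R : idomainType) (S : {pred R}).
Hypothesis semiS : semidomain S.

Lemma semidomain_semiring_closed : semiring_closed S.
Proof. by case: semiS => S0 S1 SD SM; split; split. Qed.

#[local] HB.instance Definition _ :=
  GRing.isSemiringClosed.Build R S semidomain_semiring_closed.

Lemma divides_polyC_in (d : {poly R}) (b : R) : b != 0 ->
  divides_in (polysemi S) d b%:P -> exists2 c, d = c%:P & divides_in S c b.
Proof.
move=> b0 [h [hS h0 ebdh]].
have := size_mul_eq1 d h; rewrite -ebdh size_polyC b0 eqxx.
case/esym/andP=> /eqP/eq_leq/size1_polyC dC /eqP/eq_leq/size1_polyC hC.
exists d`_0 => //; exists h`_0; split; first exact: (polyOverP hS).
  by apply: contra h0 => /eqP h00; rewrite hC h00.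
by apply/polyC_inj; rewrite polyCM -dC -hC.
Qed.

Lemma divides_in_polyC (c b : R) :
  divides_in S c b -> divides_in (polysemi S) c%:P b%:P.
Proof.
case=> h [hS h0 ->]; exists h%:P.
by rewrite polysemiE polyOverC polyC_eq0 polyCM.
Qed.

Lemma GCD_semidomain_of_poly :
  GCD_semidomain (polysemi S) -> GCD_semidomain S.
Proof.
move=> gcdSx F F_neq0 F_S.
have [d [dS d0 d_dvd d_max]] : exists d, is_gcd_of (polysemi S) (map polyC F) d.
  apply: gcdSx; first by case: (F) F_neq0.
  move=> _ /mapP[c /F_S/andP[cS c0] ->].
  by rewrite polysemiE polyOverC polyC_eq0 cS c0.
have [b bF] : exists b, b \in F.
  by case: (F) F_neq0 => // b s; exists b; rewrite mem_head.
have /andP[_ b0] := F_S b bF.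
have [c dE _] := divides_polyC_in b0 (d_dvd _ (map_f polyC bF)).
subst d.
have c0 : c != 0 by apply: contra d0 => /eqP->.
exists c; split=> //.
- by have := polyOverP dS 0; rewrite coefC.
- move=> a aF; have /andP[_ a0] := F_S a aF.
  by have [_ /polyC_inj <-] := divides_polyC_in a0 (d_dvd _ (map_f polyC aF)).
- move=> e eS e0 e_dvd.
  have e_dvd_c : divides_in (polysemi S) e%:P c%:P.
    apply: d_max; rewrite ?polysemiE ?polyOverC ?polyC_eq0 //.
    by move=> _ /mapP[a aF ->]; exact/divides_in_polyC/e_dvd.
  by have [_ /polyC_inj <-] := divides_polyC_in c0 e_dvd_c.
Qed.

Lemma monic_associate_dvd (g k d f : {poly R}) :
  g \is monic -> d \in polysemi S -> d = g * k ->
  divides_in (polysemi S) d g -> divides_in (polysemi S) d f ->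
  exists2 q, q \is a polyOver S & f = g * q.
Proof.
move=> g_monic; rewrite polysemiE => dS dgk [r [_ _ gdr]] [q [qS _ fdq]].
have kr1 : k * r = 1.
  by apply: (mulfI (monic_neq0 g_monic)); rewrite mulr1 mulrA -dgk -gdr.
have := size_mul_eq1 k r; rewrite kr1 size_poly1 eqxx.
case/esym/andP=> /eqP/eq_leq/size1_polyC kC _.
have k0S : k`_0 \in S.
  move/polyOverP/(_ (size d).-1): dS; rewrite -lead_coefE dgk lead_coefM.
  by rewrite (monicP g_monic) mul1r {1}kC lead_coefC.
exists (k`_0 *: q); first by rewrite polyOverZ.
by rewrite fdq dgk -mulrA -mul_polyC -kC.
Qed.

Lemma oppr1_in_of_GCD_poly : GCD_semidomain (polysemi S) -> -1 \in S.
Proof.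
move=> gcdSx.
pose a : {poly R} := 'X + 1; pose b : {poly R} := 'X^2 + 'X + 1.
pose x3 : {poly R} := 'X^3 + 1; pose x4 : {poly R} := 'X^4 + 'X^2 + 1.
pose c : {poly R} := 'X^2 - 'X + 1; pose g := a * b; pose f := x3 * b.
have XnaddC_monic n (p : {poly R}) : (size p <= n)%N -> 'X^n + p \is monic.
  by move=> sp; rewrite monicE lead_coefDl ?lead_coefXn // size_polyXn.
have a_monic : a \is monic by rewrite /a -polyC1 monicXaddC.
have b_monic : b \is monic.
  by rewrite /b -addrA XnaddC_monic // -polyC1 size_XaddC.
have x3_monic : x3 \is monic by rewrite /x3 XnaddC_monic // size_poly1.
have x4_monic : x4 \is monic.
  by rewrite /x4 -addrA XnaddC_monic // -polyC1 size_XnaddC.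
have g_monic : g \is monic by rewrite monicMl.
have f_monic : f \is monic by rewrite monicMl.
have monic_polysemi (p : {poly R}) : p \is a polyOver S -> p \is monic ->
    (p \in polysemi S) && (p != 0).
  by move=> pS p_monic; rewrite polysemiE pS monic_neq0.
have [aS bS x3S x4S] : [/\ a \is a polyOver S, b \is a polyOver S,
    x3 \is a polyOver S & x4 \is a polyOver S].
  by split; rewrite !rpredD ?polyOverX ?polyOverXn ?rpred1.
have [gS fS] : g \is a polyOver S /\ f \is a polyOver S by rewrite !rpredM.
have [d [dS _ d_dvd d_max]] : exists d, is_gcd_of (polysemi S) [:: f; g] d.
  by apply: gcdSx => // p; rewrite !inE => /orP[]/eqP->; apply: monic_polysemi.
have a_dvd_d : divides_in (polysemi S) a d.
  apply: d_max; rewrite ?polysemiE ?monic_neq0 // => p; rewrite !inE.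
  case/orP=> /eqP->; [exists x4 | exists b]; split; rewrite ?polysemiE ?monic_neq0 //.
  by rewrite /f /x3 /a /b /x4; ring.
have b_dvd_d : divides_in (polysemi S) b d.
  apply: d_max; rewrite ?polysemiE ?monic_neq0 // => p; rewrite !inE.
  case/orP=> /eqP->; [exists x3 | exists a]; split; rewrite ?polysemiE ?monic_neq0 //.
  - by rewrite mulrC.
  - by rewrite mulrC.
have [[e [_ _ dae]] [e' [_ _ dbe']]] := (a_dvd_d, b_dvd_d).
have /factor_theorem[k e'E] : root e' (-1).
  have /eqP := congr1 (horner^~ (-1)) (etrans (esym dae) dbe').
  rewrite !hornerM /a /b !hornerE addNr mul0r sqrrN expr1n subrr add0r mul1r.
  by rewrite eq_sym.
have dgk : d = g * k by rewrite dbe' e'E polyCN polyC1 opprK /g /a /b; ring.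
have [q qS fgq] := monic_associate_dvd g_monic dS dgk
  (d_dvd g (mem_last f [:: g])) (d_dvd f (mem_head _ _)).
have cq : c = q.
  by apply: (mulfI (monic_neq0 g_monic)); rewrite -fgq /f /g /x3 /a /b /c; ring.
move/polyOverP/(_ 1%N): qS; rewrite -cq /c !coefE /=.
by rewrite sub0r addr0.
Qed.

Lemma subring_domain_of_GCD_poly :
  GCD_semidomain (polysemi S) -> is_subring_domain S.
Proof.
by move=> /oppr1_in_of_GCD_poly N1S x xS; rewrite -mulN1r rpredM.
Qed.

End FromPolyGCD.

Section ToPolyGCD.
Variables (R : idomainType) (S : {pred R}).
Hypotheses (semiS : semidomain S) (oppS : is_subring_domain S).
Hypothesis S_gcd : GCD_semidomain S.

Lemma subring_domain_closed : subring_closed S.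
Proof.
case: semiS => S0 S1 SD SM; split=> // x y xS yS.
by rewrite SD ?oppS.
Qed.

#[local] HB.instance Definition _ :=
  GRing.isSubringClosed.Build R S subring_domain_closed.

Lemma polyOver_coef (p : {poly R}) i : p \is a polyOver S -> p`_i \in S.
Proof. by move/polyOverP. Qed.

Definition dvdS (a b : R) := exists2 c, c \in S & b = a * c.

Lemma dvdS_refl a : dvdS a a. Proof. by exists 1; rewrite ?rpred1 ?mulr1. Qed.
Lemma dvdS0 a : dvdS a 0. Proof. by exists 0; rewrite ?rpred0 ?mulr0. Qed.
Lemma dvd0S b : dvdS 0 b -> b = 0. Proof. by case=> c _ ->; rewrite mul0r. Qed.

Lemma dvdS_trans b a c : dvdS a b -> dvdS b c -> dvdS a c.
Proof. by case=> x xS -> [y yS ->]; exists (x * y); rewrite ?rpredM ?mulrA. Qed.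

Lemma dvdS_mul a b c d : dvdS a b -> dvdS c d -> dvdS (a * c) (b * d).
Proof. by case=> x xS -> [y yS ->]; exists (x * y); rewrite ?rpredM // mulrACA. Qed.

Lemma dvdS_mulr a b c : c \in S -> dvdS a b -> dvdS a (b * c).
Proof. by move=> cS [x xS ->]; exists (x * c); rewrite ?rpredM ?mulrA. Qed.

Lemma dvdS_mull a b c : c \in S -> dvdS a b -> dvdS a (c * b).
Proof. by move=> cS; rewrite mulrC; apply: dvdS_mulr. Qed.

Lemma dvdS_add a b c : dvdS a b -> dvdS a c -> dvdS a (b + c).
Proof. by case=> x xS -> [y yS ->]; exists (x + y); rewrite ?rpredD ?mulrDr. Qed.

Lemma dvdS_sub a b c : dvdS a b -> dvdS a c -> dvdS a (b - c).
Proof. by case=> x xS -> [y yS ->]; exists (x - y); rewrite ?rpredB ?mulrBr. Qed.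

Lemma dvdS_mul2l a b c : a != 0 -> dvdS (a * b) (a * c) -> dvdS b c.
Proof. by move=> a0 [x xS]; rewrite -mulrA => /(mulfI a0) ->; exists x. Qed.

Lemma dvdS_mul_unitr a b u : dvdS u 1 -> dvdS b (a * u) -> dvdS b a.
Proof.
by move=> u1 /dvdS_trans; apply; rewrite -{2}[a]mulr1; apply: dvdS_mul (dvdS_refl a) u1.
Qed.

Definition is_gcdS a b d := [/\ d \in S, dvdS d a, dvdS d b &
  forall c, c \in S -> dvdS c a -> dvdS c b -> dvdS c d].

Lemma gcdS_exists a b : a \in S -> b \in S -> exists d, is_gcdS a b d.
Proof.
move=> aS bS; have [->|a0] := eqVneq a 0.
  by exists b; split=> //; [apply: dvdS0 | apply: dvdS_refl].
have [->|b0] := eqVneq b 0.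
  by exists a; split=> //; [apply: dvdS_refl | apply: dvdS0].
have [d [dS _ d_dvd d_max]] : exists d, is_gcd_of S [:: a; b] d.
  by apply: S_gcd => // x; rewrite !inE => /orP[]/eqP->; apply/andP.
have dvdS_of x y : divides_in S x y -> dvdS x y by case=> z [zS _ ->]; exists z.
have divides_of x y : y != 0 -> dvdS x y -> divides_in S x y.
  move=> y0 [z zS yxz]; exists z; split=> //.
  by apply: contra y0 => /eqP z0; rewrite yxz z0 mulr0.
exists d; split=> //.
- by apply/dvdS_of/d_dvd; rewrite mem_head.
- by apply/dvdS_of/d_dvd; rewrite !inE eqxx orbT.
move=> c cS ca cb; have c0 : c != 0.
  by apply: contra a0 => /eqP c0; move: ca; rewrite c0 => /dvd0S ->.
apply/dvdS_of/d_max => // x; rewrite !inE => /orP[]/eqP-> {x}; exact: divides_of.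
Qed.

Definition gcdS a b := epsilon (inhabits 0) (is_gcdS a b).

Lemma gcdSP a b : a \in S -> b \in S -> is_gcdS a b (gcdS a b).
Proof. by move=> aS bS; apply: epsilon_spec; apply: gcdS_exists. Qed.

Definition coprimeS a b := forall u, u \in S -> dvdS u a -> dvdS u b -> dvdS u 1.

(* Writing gcd(b t, b a) = b e, the factor e divides both t and a. *)
Lemma coprimeS_dvd_mulr t a b : t \in S -> a \in S -> b \in S ->
  coprimeS t a -> dvdS t (a * b) -> dvdS t b.
Proof.
move=> tS aS bS t_a_coprime t_ab.
have [->|b0] := eqVneq b 0; first exact: dvdS0.
have [gS g_bt g_ba g_max] := gcdSP (rpredM bS tS) (rpredM bS aS).
have [e eS ge] : dvdS b (gcdS (b * t) (b * a)).
  by apply: g_max => //; apply: dvdS_mulr (dvdS_refl b).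
rewrite ge in g_bt g_ba g_max.
have e1 : dvdS e 1 by apply: t_a_coprime => //; exact: dvdS_mul2l b0 _.
apply: (dvdS_mul_unitr e1); apply: g_max => //; first exact: dvdS_mull (dvdS_refl t).
by rewrite mulrC.
Qed.

Definition dvdC t (p : {poly R}) := forall i, dvdS t p`_i.

Definition contS (p : {poly R}) := foldr gcdS 0 p.

Lemma contS0 : contS 0 = 0.
Proof. by rewrite /contS polyseq0. Qed.

Lemma foldr_gcdSP (s : seq R) : all (mem S) s ->
  [/\ foldr gcdS 0 s \in S, forall x, x \in s -> dvdS (foldr gcdS 0 s) x &
      forall c, c \in S -> (forall x, x \in s -> dvdS c x) -> dvdS c (foldr gcdS 0 s)].
Proof.
elim: s => [|x s IHs] /=; first by split=> // [|c _ _]; [exact: rpred0 | exact: dvdS0].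
case/andP=> xS /IHs[gS g_dvd g_max].
have [hS h_x h_g h_max] := gcdSP xS gS.
split=> // [y|c cS c_dvd].
  by rewrite inE => /orP[/eqP->//|ys]; apply: dvdS_trans h_g _; apply: g_dvd.
apply: h_max => //; first by apply: c_dvd; rewrite mem_head.
by apply: g_max => // y ys; apply: c_dvd; rewrite inE ys orbT.
Qed.

Section Content.
Variable p : {poly R}.
Hypothesis pS : p \is a polyOver S.

Lemma contS_in : contS p \in S.
Proof. by case: (foldr_gcdSP pS). Qed.

Lemma contS_dvdC : dvdC (contS p) p.
Proof.
move=> i; have [_ c_dvd _] := foldr_gcdSP pS.
by have [/(mem_nth 0)/c_dvd|/(nth_default 0)->] := ltnP i (size p); last exact: dvdS0.
Qed.

Lemma dvdC_contS t : t \in S -> dvdC t p -> dvdS t (contS p).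
Proof.
move=> tS tp; have [_ _ c_max] := foldr_gcdSP pS.
by apply: c_max => // x /(nthP 0)[i _ <-].
Qed.

Lemma contS_eq0 : (contS p == 0) = (p == 0).
Proof.
apply/eqP/eqP=> [c0|->]; last exact: contS0.
by apply/polyP=> i; rewrite coef0; have := contS_dvdC i; rewrite c0 => /dvd0S.
Qed.

End Content.

Lemma dvdC_scalel t a p : p \is a polyOver S -> dvdS t a -> dvdC t (a *: p).
Proof. by move=> pS ta i; rewrite coefZ; exact: dvdS_mulr (polyOver_coef i pS) ta. Qed.

Lemma dvdC_scale a p : p \is a polyOver S -> dvdC a p ->
  exists2 p', p' \is a polyOver S & p = a *: p'.
Proof.
move=> pS ap; pose quot i c := c \in S /\ p`_i = a * c.
have quotP i : quot i (epsilon (inhabits 0) (quot i)).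
  by apply: epsilon_spec; have [c cS pE] := ap i; exists c.
exists (\poly_(i < size p) epsilon (inhabits 0) (quot i)).
  by apply: polyOver_poly => i _; case: (quotP i).
apply/polyP=> i; rewrite coefZ coef_poly; case: ltnP => [_|pi].
  by case: (quotP i).
by rewrite mulr0 nth_default.
Qed.

Lemma dvdC_scale_contS t k r : k \in S -> r \is a polyOver S -> t \in S ->
  dvdC t (k *: r) -> dvdS t (k * contS r).
Proof.
move=> kS rS tS t_kr; have [->|k0] := eqVneq k 0; first by rewrite mul0r; apply: dvdS0.
have krS : k *: r \is a polyOver S by rewrite polyOverZ.
have [e eS cE] : dvdS k (contS (k *: r)).
  exact/(dvdC_contS krS kS)/dvdC_scalel/dvdS_refl.
apply: dvdS_trans (dvdC_contS krS tS t_kr) _; rewrite cE.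
apply/dvdS_mul/(dvdC_contS rS eS); first exact: dvdS_refl.
move=> i; apply: (@dvdS_mul2l k) => //.
by rewrite -cE -coefZ; apply: contS_dvdC.
Qed.

Definition primitiveS p := forall t, t \in S -> dvdC t p -> dvdS t 1.

Lemma primitiveS_contS p : p \is a polyOver S -> primitiveS p -> dvdS (contS p) 1.
Proof. by move=> pS p_prim; apply: p_prim; [exact: contS_in | exact: contS_dvdC]. Qed.

Lemma primitive_part p : p \is a polyOver S -> p != 0 ->
  exists2 p1, p1 \is a polyOver S & p = contS p *: p1 /\ primitiveS p1.
Proof.
move=> pS p0; have [p1 p1S pE] := dvdC_scale pS (contS_dvdC pS).
exists p1 => //; split=> // t tS tp1.
have c0 : contS p != 0 by rewrite contS_eq0.
apply: (dvdS_mul2l c0); rewrite mulr1.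
apply: (dvdC_contS pS); first by rewrite rpredM ?contS_in.
by move=> i; rewrite {2}pE coefZ; apply: dvdS_mul (dvdS_refl _) (tp1 i).
Qed.

Definition gauss_bound N := forall p q t,
  p \is a polyOver S -> q \is a polyOver S -> (size p + size q <= N)%N ->
  t \in S -> dvdC t (p * q) -> dvdS t (contS p * contS q).

Section GaussInduction.
Variable N : nat.
Hypothesis IH : gauss_bound N.

(* A common divisor u of t and lead p divides the coefficients of
   (p - lead p X^m) q, hence by induction those of p - lead p X^m, hence
   those of p. *)
Lemma coprimeS_lead_dvdC p q t :
  p \is a polyOver S -> q \is a polyOver S -> p != 0 ->
  primitiveS p -> primitiveS q -> (size p + size q <= N.+1)%N ->
  t \in S -> dvdC t (p * q) -> coprimeS t (lead_coef p).
Proof.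
move=> pS qS p0 p_prim q_prim sz tS t_pq u uS ut u_lead.
set m := (size p).-1; set p' := take_poly m p.
have sp : size p = m.+1 by rewrite /m prednK // size_poly_gt0.
have pE : p = p' + lead_coef p *: 'X^m.
  rewrite -{1}(poly_take_drop m p) -mul_polyC lead_coefE -/m; congr (_ + _ * _).
  rewrite [LHS]size1_polyC ?coef_drop_poly ?size_drop_poly //.
  by rewrite sp subSn // subnn.
have p'S : p' \is a polyOver S.
  apply/polyOverP=> i; rewrite coef_take_poly.
  by case: ifP; rewrite ?rpred0 ?polyOver_coef.
have Xq_S : 'X^m * q \is a polyOver S by rewrite rpredM ?polyOverXn.
have u_p'q : dvdC u (p' * q).
  have -> : p' * q = p * q - lead_coef p *: ('X^m * q).
    by rewrite [in p * q]pE mulrDl -scalerAl addrK.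
  move=> i; rewrite coefB; apply: dvdS_sub; first exact: dvdS_trans ut (t_pq i).
  exact: dvdC_scalel.
have u_p' : dvdS u (contS p').
  apply: (dvdS_mul_unitr (primitiveS_contS qS q_prim)); apply: IH => //.
  by move: (size_take_poly m p) sz; rewrite -/p' sp; lia.
apply: p_prim => // i; rewrite pE coefD; apply: dvdS_add.
  exact: dvdS_trans u_p' (contS_dvdC p'S i).
exact: dvdC_scalel (polyOverXn _ _) u_lead i.
Qed.

Lemma gauss_bound_step : gauss_bound N.+1.
Proof.
move=> p q t pS qS sz tS t_pq.
have [->|p0] := eqVneq p 0; first by rewrite contS0 mul0r; apply: dvdS0.
have [->|q0] := eqVneq q 0; first by rewrite contS0 mulr0; apply: dvdS0.
have [p1 p1S [pE p1_prim]] := primitive_part pS p0.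
have [q1 q1S [qE q1_prim]] := primitive_part qS q0.
have p10 : p1 != 0 by apply: contra p0; rewrite pE => /eqP->; rewrite scaler0.
have q10 : q1 != 0 by apply: contra q0; rewrite qE => /eqP->; rewrite scaler0.
have sz1 : (size p1 + size q1 <= N.+1)%N.
  by move: sz; rewrite {1}pE {1}qE !size_scale ?contS_eq0.
have pqE : p * q = (contS p * contS q) *: (p1 * q1).
  by rewrite {1}pE {1}qE -scalerAl -scalerAr scalerA.
have p1q1S : p1 * q1 \is a polyOver S by rewrite rpredM.
set c := contS (p1 * q1).
have cS : c \in S := contS_in p1q1S.
have c_dvd : dvdC c (p1 * q1) := contS_dvdC p1q1S.
(* c is coprime to both leading coefficients but divides their product. *)
have c1 : dvdS c 1.
  have c_lead : dvdS c (lead_coef p1 * lead_coef q1).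
    by rewrite -lead_coefM lead_coefE; apply: c_dvd.
  have c_lq1 := coprimeS_dvd_mulr cS (polyOver_coef _ p1S) (polyOver_coef _ q1S)
    (coprimeS_lead_dvdC p1S q1S p10 p1_prim q1_prim sz1 cS c_dvd) c_lead.
  apply: (coprimeS_lead_dvdC q1S p1S q10 q1_prim p1_prim _ cS) cS (dvdS_refl c) c_lq1.
    by rewrite addnC.
  by rewrite mulrC.
apply: (dvdS_mul_unitr c1); apply: dvdC_scale_contS => //.
  by rewrite rpredM ?contS_in.
by rewrite -pqE.
Qed.

End GaussInduction.

Lemma dvdC_mul_contS p q t : p \is a polyOver S -> q \is a polyOver S ->
  t \in S -> dvdC t (p * q) -> dvdS t (contS p * contS q).
Proof.
have gauss N : gauss_bound N.
  elim: N => [|N IH]; last exact: gauss_bound_step.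
  move=> {}p {}q {}t _ _; rewrite leqn0 addn_eq0 size_poly_eq0 => /andP[/eqP-> _].
  by move=> _ _; rewrite contS0 mul0r; apply: dvdS0.
by move=> pS qS; apply: gauss (leqnn _).
Qed.

Lemma primitive_dvdC_mul p q a : p \is a polyOver S -> q \is a polyOver S ->
  primitiveS p -> a \in S -> dvdC a (p * q) -> dvdC a q.
Proof.
move=> pS qS p_prim aS a_pq i; apply: dvdS_trans (contS_dvdC qS i).
apply: (dvdS_mul_unitr (primitiveS_contS pS p_prim)); rewrite mulrC.
exact: dvdC_mul_contS.
Qed.

Section MinimalElement.
Variable I : {poly R} -> Prop.
Hypothesis I_sub : forall p q, I p -> I q -> I (p - q).
Hypothesis I_mull : forall u p, u \is a polyOver S -> I p -> I (u * p).
Variable h : {poly R}.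
Hypotheses (hS : h \is a polyOver S) (Ih : I h) (h0 : h != 0).
Hypothesis h_min : forall p, I p -> p != 0 -> (size h <= size p)%N.

(* Pseudo-division by h, whose remainder vanishes by minimality. *)
Lemma min_elt_scaled_dvd p : p \is a polyOver S -> I p ->
  exists k, exists2 w, w \is a polyOver S & lead_coef h ^+ k *: p = h * w.
Proof.
move: {2}(size p) (leqnn (size p)) => n; elim: n p => [|n IHn] p sp pS Ip.
  move: sp; rewrite leqn0 size_poly_eq0 => /eqP->.
  by exists 0%N, 0; rewrite ?rpred0 ?scaler0 ?mulr0.
have [ph|hp] := ltnP (size p) (size h).
  have -> : p = 0 by apply: contraTeq ph => p0; rewrite -leqNgt h_min.
  by exists 0%N, 0; rewrite ?rpred0 ?scaler0 ?mulr0.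
have lhS : lead_coef h \in S := polyOver_coef _ hS.
have lh0 : lead_coef h != 0 by rewrite lead_coef_eq0.
have p0 : p != 0 by rewrite -size_poly_gt0 (leq_trans _ hp) // size_poly_gt0.
set m := (size p - size h)%N; set q := lead_coef p *: 'X^m.
have qS : q \is a polyOver S by rewrite polyOverZ ?polyOver_coef ?polyOverXn.
have lp0 : lead_coef p != 0 by rewrite lead_coef_eq0.
have sq : size q = m.+1 by rewrite size_scale // size_polyXn.
have q0 : q != 0 by rewrite -size_poly_gt0 sq.
have sqh : size (q * h) = size p.
  by rewrite size_mul // sq; move: hp; rewrite /m; lia.
set p1 := lead_coef h *: p - q * h.
have Ip1 : I p1 by rewrite /p1 -mul_polyC; apply: I_sub; apply: I_mull; rewrite ?polyOverC.
have p1S : p1 \is a polyOver S by rewrite rpredB ?polyOverZ ?rpredM.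
have sp1 : (size p1 <= n)%N.
  have lhp0 : lead_coef h *: p != 0 by rewrite -mul_polyC mulf_neq0 ?polyC_eq0.
  rewrite -ltnS (leq_trans _ sp) // -(size_scale p lh0) size_sub_lead //.
    by rewrite size_scale.
  by rewrite lead_coefZ lead_coefM lead_coefZ lead_coefXn mulr1 mulrC.
have [k [w wS p1E]] := IHn p1 sp1 p1S Ip1.
exists k.+1, (w + lead_coef h ^+ k *: q).
  by rewrite rpredD // polyOverZ // rpredX.
have pE : lead_coef h *: p = p1 + q * h by rewrite subrK.
by rewrite exprSr -scalerA pE scalerDr p1E mulrDr -scalerAr [q * h]mulrC.
Qed.

End MinimalElement.

Lemma primitive_dvd_scaled a p y r : p \is a polyOver S -> y \is a polyOver S ->
  r \is a polyOver S -> primitiveS p -> a \in S -> a != 0 -> a *: r = p * y ->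
  exists2 w, w \is a polyOver S & r = p * w.
Proof.
move=> pS yS rS p_prim aS a0 arE.
have a_py : dvdC a (p * y) by rewrite -arE; apply/dvdC_scalel/dvdS_refl.
have [w wS yE] := dvdC_scale yS (primitive_dvdC_mul pS yS p_prim aS a_py).
exists w => //; apply: (@mulfI _ a%:P); rewrite ?polyC_eq0 // !mul_polyC.
by rewrite arE yE scalerAr.
Qed.

Lemma contS_dvdC_mulr p q : p \is a polyOver S -> q \is a polyOver S ->
  dvdC (contS p) (p * q).
Proof.
move=> pS qS; have [p' p'S pE] := dvdC_scale pS (contS_dvdC pS).
by rewrite {2}pE -scalerAl; apply/dvdC_scalel/dvdS_refl; rewrite rpredM.
Qed.

Section PairGCD.
Variables f g : {poly R}.
Hypotheses (fS : f \is a polyOver S) (gS : g \is a polyOver S).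
Hypotheses (f0 : f != 0) (g0 : g != 0).

Definition combS h := exists u v,
  [/\ u \is a polyOver S, v \is a polyOver S & h = u * f + v * g].

Lemma combS_sub p q : combS p -> combS q -> combS (p - q).
Proof.
case=> [u [v [uS vS ->]]] [u' [v' [u'S v'S ->]]].
by exists (u - u'), (v - v'); split; rewrite ?rpredB //; ring.
Qed.

Lemma combS_mull w p : w \is a polyOver S -> combS p -> combS (w * p).
Proof.
move=> wS [u [v [uS vS ->]]].
by exists (w * u), (w * v); split; rewrite ?rpredM //; ring.
Qed.

Lemma combS_polyOver p : combS p -> p \is a polyOver S.
Proof. by case=> [u [v [uS vS ->]]]; rewrite rpredD ?rpredM. Qed.

Lemma combSl : combS f.
Proof. by exists 1, 0; split; rewrite ?rpred1 ?rpred0 // mul1r mul0r addr0. Qed.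

Lemma combSr : combS g.
Proof. by exists 0, 1; split; rewrite ?rpred1 ?rpred0 // mul1r mul0r add0r. Qed.

Lemma pair_gcd_polyOver : exists d, is_gcd_of (polysemi S) [:: f; g] d.
Proof.
have [h [Ih h0 h_min]] := ex_min_size combSl f0.
have hS := combS_polyOver Ih.
have [h' h'S [hE h'_prim]] := primitive_part hS h0.
have ch0 : contS h != 0 by rewrite contS_eq0.
have h'_dvd p : combS p -> exists2 w, w \is a polyOver S & p = h' * w.
  move=> Ip; have pS := combS_polyOver Ip.
  have [k [w wS pE]] := min_elt_scaled_dvd combS_sub combS_mull hS Ih h0 h_min pS Ip.
  apply: (primitive_dvd_scaled (a := lead_coef h ^+ k) h'S
    (polyOverZ (contS_in hS) wS) pS h'_prim).
  - by rewrite rpredX ?polyOver_coef.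
  - by rewrite expf_neq0 // lead_coef_eq0.
  - by rewrite pE {1}hE -scalerAl -scalerAr.
have [gcS gc_f gc_g gc_max] := gcdSP (contS_in fS) (contS_in gS).
set gc := gcdS (contS f) (contS g) in gcS gc_f gc_g gc_max.
have gc0 : gc != 0.
  apply: contra f0 => /eqP gc_eq0; rewrite -(contS_eq0 fS).
  by move: gc_f; rewrite gc_eq0 => /dvd0S ->.
have dS : gc *: h' \is a polyOver S by rewrite polyOverZ.
have d0 : gc *: h' != 0.
  rewrite -mul_polyC mulf_neq0 ?polyC_eq0 //.
  by apply: contra h0; rewrite hE => /eqP->; rewrite scaler0.
have d_dvd p : combS p -> p != 0 -> dvdS gc (contS p) ->
    divides_in (polysemi S) (gc *: h') p.
  move=> Ip p0 gc_p; have pS := combS_polyOver Ip.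
  have [w wS pE] := h'_dvd p Ip.
  have cp_w : dvdC (contS p) w.
    apply: (primitive_dvdC_mul h'S wS h'_prim (contS_in pS)).
    by rewrite -pE; apply: contS_dvdC.
  have [w' w'S wE] := dvdC_scale wS (fun i => dvdS_trans gc_p (cp_w i)).
  have pE' : p = gc *: h' * w' by rewrite pE wE -scalerAr scalerAl.
  exists w'; split; rewrite ?polysemiE //.
  by apply: contra p0; rewrite pE' => /eqP->; rewrite mulr0.
exists (gc *: h'); split; rewrite ?polysemiE //.
  move=> p; rewrite !inE => /orP[]/eqP->.
    exact: d_dvd combSl f0 gc_f.
  exact: d_dvd combSr g0 gc_g.
move=> D; rewrite polysemiE => DS D0 D_dvd.
have [x [xS _ fE]] := D_dvd f (mem_head _ _).
have [y [yS _ gE]] := D_dvd g (mem_last f [:: g]).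
rewrite polysemiE in xS yS.
have [D' D'S [DE D'_prim]] := primitive_part DS D0.
have [u [v [uS vS hE']]] := Ih.
have eS : u * x + v * y \is a polyOver S by rewrite rpredD ?rpredM.
have h'D' : contS h *: h' = D' * (contS D *: (u * x + v * y)).
  by rewrite -hE hE' fE gE {1 2}DE -!mul_polyC; ring.
have [e' e'S h'E] := primitive_dvd_scaled D'S (polyOverZ (contS_in DS) eS) h'S
  D'_prim (contS_in hS) ch0 h'D'.
have [s sS gcE] : dvdS (contS D) gc.
  apply: gc_max; first exact: contS_in.
    by apply: dvdC_contS (contS_in DS) _ => //; rewrite fE; apply: contS_dvdC_mulr.
  by apply: dvdC_contS (contS_in DS) _ => //; rewrite gE; apply: contS_dvdC_mulr.
have dE : gc *: h' = D * (s *: e').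
  by rewrite gcE h'E {2}DE -!mul_polyC polyCM; ring.
exists (s *: e'); split; rewrite ?polysemiE ?polyOverZ //.
by apply: contra d0; rewrite dE => /eqP->; rewrite mulr0.
Qed.

End PairGCD.

Lemma GCD_semidomain_poly : GCD_semidomain (polysemi S).
Proof.
apply: GCD_semidomain_of_pairs; first by move=> p q pS qS; rewrite polysemiE rpredM.
  by rewrite polysemiE rpred1.
exact: pair_gcd_polyOver.
Qed.

End ToPolyGCD.

Theorem proposition5p4 (R : idomainType) (S : {pred R}) :
  semidomain S ->
  (GCD_semidomain (polysemi S) <-> (is_subring_domain S /\ GCD_semidomain S)).
Proof.
move=> semiS; split=> [gcdSx|[oppS gcdS]].
  by split; [exact: subring_domain_of_GCD_poly | exact: GCD_semidomain_of_poly].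
exact: GCD_semidomain_poly.
Qed.
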